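(* Let $C>0$ and $\epsilon\in(0,1)$, and let $\phi_C^\epsilon(z):=z+C(1+z)^\epsilon$, where $(\cdot)^\epsilon$ denotes the principal branch of the power function. Then: (1) The map $\phi_C^\epsilon$ is biholomorphic from $H(0)=\{z\in\mathbb{C}:\operatorname{Re}z>0\}$ onto its image. (2) $\operatorname{Re}\phi_C^\epsilon(ir)\sim C\cos\left(\epsilon\frac{\pi}{2}\right)r^\epsilon$ and $\operatorname{Im}\phi_C^\epsilon(ir)\sim r$ as $r\to+\infty$ in $\mathbb{R}$. (3) There exists a continuous function $f_C^\epsilon:[C,+\infty)\to[0,+\infty)$ such that $\operatorname{Im}\phi_C^\epsilon(ir)=f_C^\epsilon(\operatorname{Re}\phi_C^\epsilon(ir))$ for all $r>0$ and $f_C^\epsilon(r)\sim K_C^\epsilon r^{1/\epsilon}$ as $r\to+\infty$, where $K_C^\epsilon:=\left(C\cos\left(\epsilon\frac{\pi}{2}\right)\right)^{-1/\epsilon}$.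
   Context: For real functions (or germs) $f,g$, $f\sim g$ means that $g(x)\neq 0$ for all sufficiently large $x$ and $f(x)/g(x)\to 1$ as $x\to+\infty$. The formula for $\phi_C^\epsilon$ also makes sense on the closed right half-plane (in particular at the points $ir$, $r>0$), and in (2),(3) $\phi_C^\epsilon$ is evaluated there. *)

From Stdlib Require Import Reals.
From Coquelicot Require Import Coquelicot.
Open Scope R_scope.

(* Principal argument, with values in (-PI, PI]  (0 at the origin). *)
Definition Carg (w : C) : R :=
  let x := Re w in let y := Im w in
  if Rlt_dec 0 x then atan (y / x)
  else if Rlt_dec x 0 then
         (if Rle_dec 0 y then atan (y / x) + PI else atan (y / x) - PI)
  else if Rlt_dec 0 y then PI / 2
  else if Rlt_dec y 0 then - (PI / 2) else 0.

Definition Cexp (z : C) : C := (exp (Re z) * cos (Im z), exp (Re z) * sin (Im z)).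
Definition Clog (w : C) : C := (ln (Cmod w), Carg w).

Definition Cpow_pr (w : C) (a : R) : C := Cexp (RtoC a * Clog w).

Definition phi (Cc eps : R) (z : C) : C :=
  z + RtoC Cc * Cpow_pr (1 + z) eps.

Definition H0 : C -> Prop := fun z => 0 < Re z.

Definition holomorphic_on (f : C -> C) (U : C -> Prop) : Prop :=
  forall z, U z -> @ex_derive C_AbsRing C_NormedModule f z.

Definition open_C (U : C -> Prop) : Prop :=
  forall z, U z -> exists e : R, 0 < e /\ forall w, Cmod (w - z) < e -> U w.

Definition biholomorphic_onto_image (f : C -> C) (U : C -> Prop) : Prop :=
  open_C U /\ holomorphic_on f U /\
  (forall z1 z2, U z1 -> U z2 -> f z1 = f z2 -> z1 = z2) /\
  open_C (fun w => exists z, U z /\ w = f z) /\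
  exists g : C -> C,
    (forall z, U z -> g (f z) = z) /\
    holomorphic_on g (fun w => exists z, U z /\ w = f z).

Definition equiv_pinfty (f g : R -> R) : Prop :=
  (exists M : R, forall x, M < x -> g x <> 0) /\
  is_lim (fun x => f x / g x) p_infty 1.

(* The derivative [phi'(z) = 1 + C eps (1 + z)^(eps - 1)] has real part [>= 1] and modulus
   [<= 1 + C eps] on [Re z > 0], because there [|arg (1 + z)| < pi/2] and [|1 + z| > 1].
   Integrating along segments gives [Re (conj (z2 - z1) (phi z2 - phi z1)) >= |z2 - z1|^2] and
   [|phi z2 - phi z1| <= (1 + C eps) |z2 - z1|]: so [phi] is injective and expanding, and for
   [lam = (1 + C eps)^-2] the map [z |-> z - lam (phi z - w)] is a contraction, whose fixed point
   solves [phi z = w] for every [w] close to a value of [phi]; the image is therefore open and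
   the inverse is holomorphic with derivative [1 / phi'].
   On the imaginary axis [(1 + i r)^eps = r^eps (1/r + i)^eps], and [(1/r + i)^eps] tends to
   [e^(i eps pi/2)], which gives (2). The real part [C (1 + r^2)^(eps/2) cos (eps atan r)]
   increases strictly from [C] to [+oo], so the imaginary part is a function [f] of it, and
   inverting [Re phi(i r) ~ C cos (eps pi/2) r^eps] in [Im phi(i r) ~ r] yields
   [f(x) ~ K x^(1/eps)]. *)

From Stdlib Require Import Reals Lra Psatz ClassicalEpsilon.
From Coquelicot Require Import Coquelicot.
Open Scope R_scope.

Notation is_Cderive := (@is_derive C_AbsRing C_NormedModule).

(** * Complex derivatives *)

Lemma is_Cderive_iff (f : C -> C) (z l : C) :
  is_Cderive f z l <->
  (forall e, 0 < e -> exists d, 0 < d /\ forall w, Cmod (w - z)%C < d ->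
     Cmod (f w - f z - (w - z) * l)%C <= e * Cmod (w - z)%C).
Proof.
  split.
  - intros [_ Hf] e He.
    assert (Hz : @is_filter_lim (AbsRing_NormedModule C_AbsRing)
                   (@locally (AbsRing_UniformSpace C_AbsRing) z) z) by (intros P HP; exact HP).
    destruct (Hf z Hz (mkposreal e He)) as [d Hd].
    exists d; split; [apply cond_pos | exact Hd].
  - intros Hf; split; [apply is_linear_scal_l |].
    intros x Hx.
    apply (@is_filter_lim_locally_unique C_AbsRing (AbsRing_NormedModule C_AbsRing)) in Hx; subst x.
    intros e; destruct (Hf e (cond_pos e)) as [d [Hd Hw]].
    exists (mkposreal d Hd); exact Hw.
Qed.

(* Coquelicot's chain rule wants the inner derivative in [AbsRing_NormedModule C_AbsRing],
   a structure on [C] that does not unify with [C_NormedModule]. *)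
Lemma is_Cderive_AbsRing (f : C -> C) (z l : C) :
  is_Cderive f z l <-> @is_derive C_AbsRing (AbsRing_NormedModule C_AbsRing) f z l.
Proof. split; intros [_ Hf]; (split; [apply is_linear_scal_l | exact Hf]). Qed.

Lemma is_Cderive_eq_deriv (f : C -> C) (z l l' : C) :
  is_Cderive f z l -> l = l' -> is_Cderive f z l'.
Proof. intros H <-; exact H. Qed.

Lemma is_Cderive_id (z : C) : is_Cderive (fun t => t) z (RtoC 1).
Proof. apply is_Cderive_AbsRing; exact (@is_derive_id C_AbsRing z). Qed.

Lemma is_Cderive_comp (f g : C -> C) (z lf lg : C) :
  is_Cderive f (g z) lf -> is_Cderive g z lg -> is_Cderive (fun t => f (g t)) z (lg * lf)%C.
Proof.
  intros Hf Hg; exact (is_derive_comp f g z lf lg Hf (proj1 (is_Cderive_AbsRing g z lg) Hg)).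
Qed.

Lemma is_Cderive_scal (c : C) (f : C -> C) (z l : C) :
  is_Cderive f z l -> is_Cderive (fun t => c * f t)%C z (c * l)%C.
Proof.
  intros Hf.
  replace (c * l)%C with (@scal _ C_NormedModule l c) by apply Cmult_comm.
  apply (is_derive_ext (fun t => @scal _ C_NormedModule (f t) c)); [intros t; apply Cmult_comm |].
  exact (is_derive_scal_l f z l c (proj1 (is_Cderive_AbsRing f z l) Hf)).
Qed.

Lemma Cmod_le_Rabs_Re_Im (z : C) : Cmod z <= Rabs (Re z) + Rabs (Im z).
Proof.
  destruct z as [u v]; unfold Cmod, Re, Im; simpl.
  pose proof (Rabs_pos u); pose proof (Rabs_pos v).
  rewrite <- (sqrt_Rsqr (Rabs u + Rabs v)) by lra.
  apply sqrt_le_1_alt.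
  pose proof (Rsqr_abs u); pose proof (Rsqr_abs v); unfold Rsqr in *; nra.
Qed.

Lemma differentiable_pt_lim_eq_deriv f x y lx ly lx' ly' :
  differentiable_pt_lim f x y lx ly -> lx = lx' -> ly = ly' ->
  differentiable_pt_lim f x y lx' ly'.
Proof. intros H <- <-; exact H. Qed.

Lemma differentiable_pt_lim_fst x y : differentiable_pt_lim (fun a _ => a) x y 1 0.
Proof. apply (differentiable_pt_lim_proj1_0 (fun a => a)), derivable_pt_lim_id. Qed.

Lemma differentiable_pt_lim_snd x y : differentiable_pt_lim (fun _ b => b) x y 0 1.
Proof.
  intros e; exists e; intros u v _ _.
  replace (v - y - (0 * (u - x) + 1 * (v - y))) with 0 by ring.
  rewrite Rabs_R0; apply Rmult_le_pos; [apply Rlt_le, cond_pos |].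
  apply Rle_trans with (Rabs (u - x)); [apply Rabs_pos | apply Rmax_l].
Qed.

Lemma differentiable_pt_lim_plus f g x y f1 f2 g1 g2 :
  differentiable_pt_lim f x y f1 f2 -> differentiable_pt_lim g x y g1 g2 ->
  differentiable_pt_lim (fun a b => f a b + g a b) x y (f1 + g1) (f2 + g2).
Proof.
  intros Hf Hg.
  assert (Hplus : differentiable_pt_lim Rplus (f x y) (g x y) 1 1).
  { intros e; exists e; intros u v _ _.
    replace (u + v - (f x y + g x y) - (1 * (u - f x y) + 1 * (v - g x y))) with 0 by ring.
    rewrite Rabs_R0; apply Rmult_le_pos; [apply Rlt_le, cond_pos |].
    apply Rle_trans with (Rabs (u - f x y)); [apply Rabs_pos | apply Rmax_l]. }
  eapply differentiable_pt_lim_eq_deriv;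
    [apply (differentiable_pt_lim_comp Rplus); eassumption | ring | ring].
Qed.

Lemma differentiable_pt_lim_mult f g x y f1 f2 g1 g2 :
  differentiable_pt_lim f x y f1 f2 -> differentiable_pt_lim g x y g1 g2 ->
  differentiable_pt_lim (fun a b => f a b * g a b) x y
    (f1 * g x y + f x y * g1) (f2 * g x y + f x y * g2).
Proof.
  intros Hf Hg.
  assert (Hmult : forall p q, differentiable_pt_lim Rmult p q q p).
  { intros p q e; exists e; intros u v _ Hv.
    replace (u * v - p * q - (q * (u - p) + p * (v - q))) with ((u - p) * (v - q)) by ring.
    pose proof (Rmax_l (Rabs (u - p)) (Rabs (v - q))).
    pose proof (Rmax_r (Rabs (u - p)) (Rabs (v - q))).
    pose proof (Rabs_pos (u - p)); pose proof (Rabs_pos (v - q)).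
    rewrite Rabs_mult.
    apply Rle_trans with (Rmax (Rabs (u - p)) (Rabs (v - q)) * Rabs (v - q)); nra. }
  eapply differentiable_pt_lim_eq_deriv;
    [apply (differentiable_pt_lim_comp Rmult); [apply Hmult | exact Hf | exact Hg] | ring | ring].
Qed.

Lemma differentiable_pt_lim_comp_1d (g : R -> R) f x y l f1 f2 :
  derivable_pt_lim g (f x y) l -> differentiable_pt_lim f x y f1 f2 ->
  differentiable_pt_lim (fun a b => g (f a b)) x y (l * f1) (l * f2).
Proof.
  intros Hg Hf.
  eapply differentiable_pt_lim_eq_deriv;
    [apply (differentiable_pt_lim_comp (fun a _ => g a) f f);
       [apply differentiable_pt_lim_proj1_0, Hg | exact Hf | exact Hf] | ring | ring].
Qed.

Lemma is_Cderive_Cauchy_Riemann (f : C -> C) (x y p q : R) :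
  differentiable_pt_lim (fun a b => Re (f (a, b))) x y p (- q) ->
  differentiable_pt_lim (fun a b => Im (f (a, b))) x y q p ->
  is_Cderive f (x, y) (p, q).
Proof.
  intros Hu Hv; apply is_Cderive_iff; intros e He.
  destruct (Hu (mkposreal (e / 2) ltac:(lra))) as [d1 H1].
  destruct (Hv (mkposreal (e / 2) ltac:(lra))) as [d2 H2].
  exists (Rmin d1 d2); split; [apply Rmin_pos; apply cond_pos |].
  intros [a b] Hw.
  pose proof (Rmax_Cmod ((a, b) - (x, y))%C) as Hm; simpl in Hm, Hw.
  pose proof (Rmax_l (Rabs (a + - x)) (Rabs (b + - y))).
  pose proof (Rmax_r (Rabs (a + - x)) (Rabs (b + - y))).
  pose proof (Rmin_l d1 d2); pose proof (Rmin_r d1 d2).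
  assert (Ha : Rabs (a - x) < Rmin d1 d2) by (unfold Rminus; lra).
  assert (Hb : Rabs (b - y) < Rmin d1 d2) by (unfold Rminus; lra).
  specialize (H1 a b ltac:(lra) ltac:(lra)); specialize (H2 a b ltac:(lra) ltac:(lra)).
  unfold Re, Im in H1, H2; simpl in H1, H2.
  eapply Rle_trans; [apply Cmod_le_Rabs_Re_Im |].
  destruct (f (a, b)) as [u1 v1], (f (x, y)) as [u0 v0]; unfold Re, Im; simpl in *.
  unfold Rminus in H1, H2.
  replace (u1 + - u0 + - ((a + - x) * p - (b + - y) * q))
    with (u1 + - u0 + - (p * (a + - x) + - q * (b + - y))) by ring.
  replace (v1 + - v0 + - ((a + - x) * q + (b + - y) * p))
    with (v1 + - v0 + - (q * (a + - x) + p * (b + - y))) by ring.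
  nra.
Qed.

Lemma is_Cderive_Cexp (z : C) : is_Cderive Cexp z (Cexp z).
Proof.
  destruct z as [x y]; unfold Cexp at 2; unfold Re, Im; simpl.
  apply is_Cderive_Cauchy_Riemann; unfold Cexp, Re, Im; simpl.
  - eapply differentiable_pt_lim_eq_deriv; [apply differentiable_pt_lim_mult | |].
    + apply (differentiable_pt_lim_comp_1d exp (fun a _ => a));
        [apply derivable_pt_lim_exp | apply differentiable_pt_lim_fst].
    + apply (differentiable_pt_lim_comp_1d cos (fun _ b => b));
        [apply derivable_pt_lim_cos | apply differentiable_pt_lim_snd].
    + simpl; ring.
    + simpl; ring.
  - eapply differentiable_pt_lim_eq_deriv; [apply differentiable_pt_lim_mult | |].
    + apply (differentiable_pt_lim_comp_1d exp (fun a _ => a));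
        [apply derivable_pt_lim_exp | apply differentiable_pt_lim_fst].
    + apply (differentiable_pt_lim_comp_1d sin (fun _ b => b));
        [apply derivable_pt_lim_sin | apply differentiable_pt_lim_snd].
    + simpl; ring.
    + simpl; ring.
Qed.

Lemma Carg_of_Re_pos (w : C) : 0 < Re w -> Carg w = atan (Im w / Re w).
Proof. intros H; unfold Carg; destruct (Rlt_dec 0 (Re w)); [reflexivity | lra]. Qed.

Lemma is_Cderive_Clog (w : C) : 0 < Re w -> is_Cderive Clog w (/ w)%C.
Proof.
  destruct w as [x y]; unfold Re; simpl; intros Hx.
  assert (Hs : 0 < x * x + y * y) by nra.
  assert (Hq : sqrt (x * x + y * y) * sqrt (x * x + y * y) = x * x + y * y)
    by (apply sqrt_sqrt; lra).
  assert (Hq0 : 0 < sqrt (x * x + y * y)) by (apply sqrt_lt_R0; lra).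
  assert (Hq_mul : x * (x * 1) + y * (y * 1) = sqrt (x * x + y * y) * sqrt (x * x + y * y))
    by (rewrite Hq; ring).
  unfold Cinv; simpl.
  apply is_Cderive_Cauchy_Riemann; unfold Re, Im; simpl.
  - apply (differentiable_pt_lim_ext (fun a b => ln (sqrt (a * a + b * b)))).
    { exists (mkposreal 1 Rlt_0_1); intros u v _ _; unfold Cmod; simpl; do 3 f_equal; ring. }
    eapply differentiable_pt_lim_eq_deriv.
    + apply (differentiable_pt_lim_comp_1d ln (fun a b => sqrt (a * a + b * b)));
        [apply derivable_pt_lim_ln, Hq0 |].
      apply (differentiable_pt_lim_comp_1d sqrt (fun a b => a * a + b * b));
        [apply derivable_pt_lim_sqrt, Hs |].
      apply differentiable_pt_lim_plus; apply differentiable_pt_lim_mult;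
        first [apply differentiable_pt_lim_fst | apply differentiable_pt_lim_snd].
    + simpl; rewrite Hq_mul; field; lra.
    + simpl; rewrite Hq_mul; field; lra.
  - apply (differentiable_pt_lim_ext (fun a b => atan (b * / a))).
    { exists (mkposreal x Hx); intros u v Hu _; simpl in Hu; apply Rabs_def2 in Hu.
      rewrite Carg_of_Re_pos; unfold Re, Im; simpl; [reflexivity | lra]. }
    eapply differentiable_pt_lim_eq_deriv.
    + apply (differentiable_pt_lim_comp_1d atan (fun a b => b * / a));
        [apply derivable_pt_lim_atan |].
      apply differentiable_pt_lim_mult; [apply differentiable_pt_lim_snd |].
      apply (differentiable_pt_lim_comp_1d Rinv (fun a _ => a));
        [apply is_derive_Reals, (is_derive_inv (fun t => t)); [apply is_derive_id | lra] |
         apply differentiable_pt_lim_fst].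
    + unfold one; simpl; field; lra.
    + unfold one; simpl; field; lra.
Qed.

(** * Principal powers and the derivative of [phi] *)

Lemma Rpower_pos (x a : R) : 0 < Rpower x a.
Proof. apply exp_pos. Qed.

Lemma Rpower_1_l (a : R) : Rpower 1 a = 1.
Proof. unfold Rpower; rewrite ln_1, Rmult_0_r; apply exp_0. Qed.

Lemma Cmod_polar (r t : R) : 0 <= r -> Cmod (r * cos t, r * sin t) = r.
Proof.
  intros Hr; unfold Cmod; cbn [fst snd].
  replace ((r * cos t) ^ 2 + (r * sin t) ^ 2) with (r * r)
    by (pose proof (sin2_cos2 t); unfold Rsqr in *; nra).
  apply sqrt_square, Hr.
Qed.

Lemma polar_of_Re_pos (w : C) : 0 < Re w ->
  Re w = Cmod w * cos (Carg w) /\ Im w = Cmod w * sin (Carg w).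
Proof.
  intros Hw; rewrite Carg_of_Re_pos by exact Hw.
  assert (Hm : 0 < Cmod w) by (pose proof (re_le_Cmod w); pose proof (Rle_abs (Re w)); lra).
  assert (Hs : sqrt (1 + (Im w / Re w)²) = Cmod w / Re w).
  { rewrite <- (sqrt_Rsqr (Cmod w / Re w)) by (apply Rlt_le, Rdiv_lt_0_compat; lra).
    f_equal; unfold Rsqr.
    replace (Cmod w / Re w * (Cmod w / Re w)) with (Cmod w ^ 2 / (Re w * Re w)) by (field; lra).
    rewrite Cmod2_alt; field; lra. }
  rewrite cos_atan, sin_atan, Hs; split; field; lra.
Qed.

Lemma Cpow_pr_polar (w : C) (a : R) :
  Cpow_pr w a = (Rpower (Cmod w) a * cos (a * Carg w), Rpower (Cmod w) a * sin (a * Carg w)).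
Proof.
  unfold Cpow_pr, Cexp, Clog, Rpower, Re, Im; simpl.
  apply injective_projections; simpl; f_equal; f_equal; ring.
Qed.

Lemma Cmod_Cpow_pr (w : C) (a : R) : Cmod (Cpow_pr w a) = Rpower (Cmod w) a.
Proof. rewrite Cpow_pr_polar; apply Cmod_polar, Rlt_le, Rpower_pos. Qed.

Lemma Re_Cpow_pr_pos (w : C) (a : R) : 0 < Re w -> -1 <= a <= 1 -> 0 < Re (Cpow_pr w a).
Proof.
  intros Hw Ha; rewrite Cpow_pr_polar, Carg_of_Re_pos by exact Hw; unfold Re at 1; simpl.
  pose proof (atan_bound (Im w / Re w)); set (t := atan (Im w / Re w)) in *.
  assert (Ht : Rabs t < PI / 2) by (apply Rabs_def1; lra).
  assert (Hat : Rabs (a * t) <= Rabs t).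
  { rewrite Rabs_mult; assert (Rabs a <= 1) by (apply Rabs_le; lra).
    pose proof (Rabs_pos t); nra. }
  apply Rmult_lt_0_compat; [apply Rpower_pos |].
  destruct (Rabs_def2 (a * t) (PI / 2) ltac:(lra)); apply cos_gt_0; lra.
Qed.

Lemma Cpow_pr_succ (w : C) (a : R) : 0 < Re w -> Cpow_pr w (a + 1) = (Cpow_pr w a * w)%C.
Proof.
  intros Hw; destruct (polar_of_Re_pos w Hw) as [Ex Ey].
  assert (Hm : 0 < Cmod w) by (pose proof (re_le_Cmod w); pose proof (Rle_abs (Re w)); lra).
  rewrite !Cpow_pr_polar, Rpower_plus, Rpower_1 by exact Hm.
  replace ((a + 1) * Carg w) with (a * Carg w + Carg w) by ring.
  rewrite cos_plus, sin_plus.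
  set (m := Cmod w) in *; set (t := Carg w) in *; clearbody m t.
  destruct w as [x y]; unfold Re, Im in Ex, Ey; simpl in Ex, Ey; subst x y.
  apply injective_projections; simpl; ring.
Qed.

Definition dphi (Cc eps : R) (z : C) : C :=
  (1 + RtoC Cc * RtoC eps * Cpow_pr (1 + z) (eps - 1))%C.

Lemma is_Cderive_phi (Cc eps : R) (z : C) :
  0 < Re z -> is_Cderive (phi Cc eps) z (dphi Cc eps z).
Proof.
  intros Hz.
  assert (Hz1 : 0 < Re (1 + z)%C) by (unfold Re in *; simpl; lra).
  assert (Hshift := is_derive_plus (fun _ => RtoC 1) (fun t => t) z zero (RtoC 1)
                      (is_derive_const _ _) (is_Cderive_id z)).
  assert (Hlog := is_Cderive_comp Clog _ z _ _ (is_Cderive_Clog _ Hz1) Hshift).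
  assert (Hpow := is_Cderive_comp Cexp _ z _ _ (is_Cderive_Cexp _)
                    (is_Cderive_scal (RtoC eps) _ z _ Hlog)).
  assert (Hphi := is_derive_plus _ _ z _ _ (is_Cderive_id z)
                    (is_Cderive_scal (RtoC Cc) _ z _ Hpow)).
  apply (is_Cderive_eq_deriv _ _ _ _ Hphi).
  assert (Hnz : (1 + z)%C <> RtoC 0)
    by (intros E; rewrite E in Hz1; unfold Re in Hz1; simpl in Hz1; lra).
  assert (Hsucc := Cpow_pr_succ (1 + z) (eps - 1) Hz1).
  replace (eps - 1 + 1) with eps in Hsucc by ring.
  unfold dphi, Cpow_pr in *; rewrite Hsucc; unfold plus, zero; simpl.
  field; exact Hnz.
Qed.

Lemma Re_dphi_ge_1 (Cc eps : R) (z : C) :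
  0 <= Cc -> 0 <= eps <= 2 -> 0 < Re z -> 1 <= Re (dphi Cc eps z).
Proof.
  intros HC He Hz.
  assert (Hpos : 0 < Re (Cpow_pr (1 + z) (eps - 1))).
  { apply Re_Cpow_pr_pos; [unfold Re in *; simpl; lra | lra]. }
  unfold dphi; revert Hpos; generalize (Cpow_pr (1 + z) (eps - 1)); intros [p q] Hp.
  assert (0 <= Cc * eps) by nra; unfold Re in *; simpl in *; nra.
Qed.

Lemma Cmod_dphi_le (Cc eps : R) (z : C) :
  0 <= Cc -> 0 <= eps <= 1 -> 0 < Re z -> Cmod (dphi Cc eps z) <= 1 + Cc * eps.
Proof.
  intros HC He Hz.
  assert (Hm : 1 <= Cmod (1 + z)%C).
  { pose proof (re_le_Cmod (1 + z)%C); pose proof (Rle_abs (Re (1 + z)%C)).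
    unfold Re in *; simpl in *; lra. }
  assert (Hpow : Rpower (Cmod (1 + z)%C) (eps - 1) <= 1).
  { eapply Rle_trans; [apply (Rle_Rpower _ _ 0); lra | rewrite Rpower_O; lra]. }
  unfold dphi; rewrite <- RtoC_mult.
  eapply Rle_trans; [apply Cmod_triangle |].
  rewrite Cmod_1, Cmod_mult, Cmod_R, Cmod_Cpow_pr, Rabs_pos_eq by nra.
  assert (0 <= Cc * eps) by nra; nra.
Qed.

(** * Contractions in the complex plane *)

Lemma Rabs_Re_sub_le (a b : C) : Rabs (Re a - Re b) <= Cmod (a - b).
Proof.
  pose proof (Rmax_Cmod (a - b)%C) as H; simpl in H.
  pose proof (Rmax_l (Rabs (fst a + - fst b)) (Rabs (snd a + - snd b))); unfold Re, Rminus; lra.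
Qed.

Lemma Rabs_Im_sub_le (a b : C) : Rabs (Im a - Im b) <= Cmod (a - b).
Proof.
  pose proof (Rmax_Cmod (a - b)%C) as H; simpl in H.
  pose proof (Rmax_r (Rabs (fst a + - fst b)) (Rabs (snd a + - snd b))); unfold Im, Rminus; lra.
Qed.

Lemma Cmod_sub_triangle (a b c : C) : Cmod (a - c) <= Cmod (a - b) + Cmod (b - c).
Proof. replace (a - c)%C with ((a - b) + (b - c))%C by ring; apply Cmod_triangle. Qed.

Lemma Cmod_sub_sym (a b : C) : Cmod (a - b) = Cmod (b - a).
Proof. rewrite <- Cmod_opp; f_equal; ring. Qed.

Lemma Cminus_eq_0 (a b : C) : Cmod (a - b) = 0 -> a = b.
Proof.
  intros H; apply Cmod_eq_0 in H.
  replace a with ((a - b) + b)%C by ring; rewrite H; ring.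
Qed.

Lemma exists_pow_lt (q e : R) : 0 <= q < 1 -> 0 < e -> exists N, q ^ N < e.
Proof.
  intros Hq He; destruct (pow_lt_1_zero q ltac:(rewrite Rabs_pos_eq; lra) e He) as [N HN].
  exists N; specialize (HN N (Nat.le_refl N)); rewrite Rabs_pos_eq in HN by (apply pow_le; lra).
  exact HN.
Qed.

Lemma pow_le_one (q : R) (n : nat) : 0 <= q <= 1 -> q ^ n <= 1.
Proof. intros Hq; rewrite <- (pow1 n); apply pow_incr, Hq. Qed.

Lemma le_of_le_add_pow (a b K q : R) : 0 <= q < 1 -> (forall n, a <= b + K * q ^ n) -> a <= b.
Proof.
  intros Hq H; destruct (Rle_lt_dec a b) as [Hab | Hab]; [exact Hab | exfalso].
  destruct (Rle_lt_dec K 0) as [HK | HK].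
  - specialize (H O); simpl in H; lra.
  - destruct (exists_pow_lt q ((a - b) / K) Hq) as [N HN]; [apply Rdiv_lt_0_compat; lra |].
    specialize (H N); apply (Rmult_lt_compat_l K) in HN; [| exact HK].
    replace (K * ((a - b) / K)) with (a - b) in HN by (field; lra); lra.
Qed.

Lemma Un_cv_dist_le (u : nat -> R) (l c K : R) (n0 : nat) :
  Un_cv u l -> (forall m, (n0 <= m)%nat -> Rabs (u m - c) <= K) -> Rabs (l - c) <= K.
Proof.
  intros Hu Hb; destruct (Rle_lt_dec (Rabs (l - c)) K) as [H | H]; [exact H | exfalso].
  destruct (Hu (Rabs (l - c) - K)) as [N HN]; [lra |].
  specialize (HN (Nat.max N n0) (Nat.le_max_l N n0)).
  specialize (Hb (Nat.max N n0) (Nat.le_max_r N n0)).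
  unfold Rdist in HN; rewrite Rabs_minus_sym in HN.
  pose proof (Rabs_triang (l - u (Nat.max N n0)) (u (Nat.max N n0) - c)) as Htri.
  replace (l - u (Nat.max N n0) + (u (Nat.max N n0) - c)) with (l - c) in Htri by ring; lra.
Qed.

Lemma geometric_cauchy_C (x : nat -> C) (c q : R) : 0 <= q < 1 ->
  (forall n m, (n <= m)%nat -> Cmod (x m - x n) <= c * q ^ n) ->
  exists l, forall n, Cmod (l - x n) <= 2 * (c * q ^ n).
Proof.
  intros Hq Hx.
  assert (Hc : 0 <= c).
  { specialize (Hx O O (Nat.le_refl O)); replace (x O - x O)%C with (RtoC 0) in Hx by ring.
    rewrite Cmod_0 in Hx; simpl in Hx; lra. }
  assert (Hcoord : forall p : C -> R, (forall a b, Rabs (p a - p b) <= Cmod (a - b)) ->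
            exists l, forall n, Rabs (l - p (x n)) <= c * q ^ n).
  { intros p Hp.
    assert (Hcauchy : Cauchy_crit (fun n => p (x n))).
    { intros e He; destruct (exists_pow_lt q (e / (2 * c + 1)) Hq) as [N HN].
      { apply Rdiv_lt_0_compat; lra. }
      apply (Rmult_lt_compat_l (2 * c + 1)) in HN; [| lra].
      replace ((2 * c + 1) * (e / (2 * c + 1))) with e in HN by (field; lra).
      exists N; intros n m Hn Hm; unfold Rdist.
      pose proof (Hp (x n) (x N)) as Hn'; pose proof (Hp (x N) (x m)) as Hm'.
      pose proof (Hx N n Hn) as Hxn; pose proof (Hx N m Hm) as Hxm.
      rewrite Cmod_sub_sym in Hm'.
      pose proof (pow_le q N ltac:(lra)).
      pose proof (Rabs_triang (p (x n) - p (x N)) (p (x N) - p (x m))) as Htri.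
      replace (p (x n) - p (x N) + (p (x N) - p (x m))) with (p (x n) - p (x m)) in Htri by ring.
      nra. }
    destruct (Rcomplete.R_complete _ Hcauchy) as [l Hl]; exists l; intros n.
    apply (Un_cv_dist_le _ _ _ _ n Hl); intros m Hm.
    eapply Rle_trans; [apply Hp | apply Hx, Hm]. }
  destruct (Hcoord Re Rabs_Re_sub_le) as [l1 H1], (Hcoord Im Rabs_Im_sub_le) as [l2 H2].
  exists (l1, l2); intros n.
  eapply Rle_trans; [apply Cmod_le_Rabs_Re_Im |].
  specialize (H1 n); specialize (H2 n); unfold Re, Im in *; simpl in *; unfold Rminus in *; lra.
Qed.

Section ContractionOnBall.

Variables (T : C -> C) (z0 : C) (q rho : R).
Hypothesis q_bounds : 0 <= q < 1.
Hypothesis T_contraction : forall z1 z2, Cmod (z1 - z0) < rho -> Cmod (z2 - z0) < rho ->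
  Cmod (T z2 - T z1) <= q * Cmod (z2 - z1).
Hypothesis T_z0_near : Cmod (T z0 - z0) < (1 - q) * rho.

Let B := Cmod (T z0 - z0) / (1 - q).
Let x n := Nat.iter n T z0.

Let B_ge_0 : 0 <= B.
Proof. apply Rmult_le_pos; [apply Cmod_ge_0 | apply Rlt_le, Rinv_0_lt_compat; lra]. Qed.

Let B_lt_rho : B < rho.
Proof. apply (Rmult_lt_reg_l (1 - q)); [lra |]; unfold B; field_simplify; lra. Qed.

Let first_step : Cmod (T z0 - z0) = (1 - q) * B.
Proof. unfold B; field; lra. Qed.

Let iterates_steps n :
  Cmod (x (S n) - x n) <= q ^ n * ((1 - q) * B) /\ Cmod (x n - z0) <= B * (1 - q ^ n).
Proof.
  induction n as [| n [IHstep IHdist]].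
  - simpl; rewrite first_step; replace (z0 - z0)%C with (RtoC 0) by ring; rewrite Cmod_0; lra.
  - pose proof (pow_le q n ltac:(lra)); pose proof (pow_le q (S n) ltac:(lra)).
    assert (Hq1 : q ^ S n <= 1) by (apply pow_le_one; lra).
    assert (Hdist : Cmod (x (S n) - z0) <= B * (1 - q ^ S n)).
    { eapply Rle_trans; [apply (Cmod_sub_triangle _ (x n)) |]; simpl pow; nra. }
    split; [| exact Hdist].
    change (x (S (S n))) with (T (x (S n))); change (x (S n)) with (T (x n)) at 2.
    eapply Rle_trans; [apply T_contraction |].
    + assert (q ^ n <= 1) by (apply pow_le_one; lra); nra.
    + nra.
    + simpl pow; pose proof (Cmod_ge_0 (x (S n) - x n)%C); nra.
Qed.

Let iterates_cauchy n m : (n <= m)%nat -> Cmod (x m - x n) <= B * q ^ n.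
Proof.
  intros Hnm; replace m with (m - n + n)%nat by lia.
  assert (Hk : forall k, Cmod (x (k + n) - x n) <= B * q ^ n * (1 - q ^ k)).
  { induction k as [| k IH].
    - simpl; replace (x n - x n)%C with (RtoC 0) by ring; rewrite Cmod_0; lra.
    - change (S k + n)%nat with (S (k + n)).
      eapply Rle_trans; [apply (Cmod_sub_triangle _ (x (k + n)%nat)) |].
      destruct (iterates_steps (k + n)) as [Hstep _]; rewrite pow_add in Hstep.
      pose proof (pow_le q n ltac:(lra)); pose proof (pow_le q k ltac:(lra)).
      simpl pow; nra. }
  eapply Rle_trans; [apply Hk |].
  pose proof (pow_le q n ltac:(lra)); pose proof (pow_le q (m - n) ltac:(lra)).
  assert (0 <= B * q ^ n) by nra; nra.
Qed.

Let iterates_in_ball n : Cmod (x n - z0) < rho.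
Proof.
  destruct (iterates_steps n) as [_ H]; pose proof (pow_le q n ltac:(lra)); nra.
Qed.

Theorem contraction_fixed_point_in_ball : exists z, Cmod (z - z0) < rho /\ T z = z.
Proof.
  destruct (geometric_cauchy_C x B q q_bounds iterates_cauchy) as [l Hl].
  assert (Hl0 : Cmod (l - z0) <= B).
  { apply (le_of_le_add_pow _ _ (2 * B) q q_bounds); intros n.
    eapply Rle_trans; [apply (Cmod_sub_triangle _ (x n)) |].
    destruct (iterates_steps n) as [_ Hn]; specialize (Hl n).
    pose proof (pow_le q n ltac:(lra)); nra. }
  exists l; split; [lra |].
  apply Cminus_eq_0, Rle_antisym; [| apply Cmod_ge_0].
  apply (le_of_le_add_pow _ _ (4 * B) q q_bounds); intros n.
  eapply Rle_trans; [apply (Cmod_sub_triangle _ (x (S n))) |].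
  change (x (S n)) with (T (x n)).
  assert (Hc : Cmod (T l - T (x n)) <= q * Cmod (l - x n)).
  { apply T_contraction; [apply iterates_in_ball | lra]. }
  pose proof (Hl n) as Hn; pose proof (Hl (S n)) as HSn.
  rewrite Cmod_sub_sym in HSn; change (x (S n)) with (T (x n)) in HSn.
  pose proof (pow_le q n ltac:(lra)); simpl pow in HSn.
  assert (0 <= B * q ^ n) by nra; nra.
Qed.

End ContractionOnBall.

(** * Holomorphic maps with [1 <= Re f'] and [|f'| <= L] on the right half-plane *)

Lemma is_derive_R_iff (f : R -> R) (x l : R) :
  is_derive f x l <->
  (forall e, 0 < e -> exists d, 0 < d /\ forall y, Rabs (y - x) < d ->
     Rabs (f y - f x - (y - x) * l) <= e * Rabs (y - x)).
Proof.
  split.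
  - intros [_ Hf] e He.
    assert (Hx : is_filter_lim (locally x) x) by (intros P HP; exact HP).
    destruct (Hf x Hx (mkposreal e He)) as [d Hd].
    exists d; split; [apply cond_pos | exact Hd].
  - intros Hf; split; [apply is_linear_scal_l |].
    intros y Hy.
    apply (@is_filter_lim_locally_unique R_AbsRing (AbsRing_NormedModule R_AbsRing)) in Hy; subst y.
    intros e; destruct (Hf e (cond_pos e)) as [d [Hd Hw]].
    exists (mkposreal d Hd); exact Hw.
Qed.

Lemma derivable_pt_lim_Re_along_line (f : C -> C) (z d u l : C) (t : R) :
  is_Cderive f (z + RtoC t * d)%C l ->
  derivable_pt_lim (fun s => Re (u * f (z + RtoC s * d)%C)%C) t (Re (u * d * l)%C).
Proof.
  intros Hf; apply is_derive_Reals, is_derive_R_iff; intros e He.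
  set (z0 := (z + RtoC t * d)%C) in Hf |- *.
  pose proof (Cmod_ge_0 u); pose proof (Cmod_ge_0 d).
  set (K := Cmod u * Cmod d + 1).
  assert (HK : 0 < K) by (unfold K; nra).
  destruct (proj1 (is_Cderive_iff _ _ _) Hf (e / K)) as [r [Hr Hw]];
    [apply Rdiv_lt_0_compat; lra |].
  exists (r / (Cmod d + 1)); split; [apply Rdiv_lt_0_compat; lra |].
  intros y Hy.
  set (w := (z + RtoC y * d)%C).
  assert (Ewz : (w - z0)%C = (RtoC (y - t) * d)%C) by (unfold w, z0; rewrite RtoC_minus; ring).
  assert (Hwz : Cmod (w - z0) = Rabs (y - t) * Cmod d)
    by (rewrite Ewz, Cmod_mult, Cmod_R; reflexivity).
  assert (Hclose : Cmod (w - z0) < r).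
  { rewrite Hwz; apply (Rmult_lt_compat_r (Cmod d + 1)) in Hy; [| lra].
    replace (r / (Cmod d + 1) * (Cmod d + 1)) with r in Hy by (field; lra).
    pose proof (Rabs_pos (y - t)); nra. }
  specialize (Hw w Hclose).
  replace (Re (u * f w) - Re (u * f z0) - (y - t) * Re (u * d * l))
    with (Re (u * (f w - f z0 - (w - z0) * l))%C)
    by (rewrite Ewz; unfold Re; simpl; ring).
  eapply Rle_trans; [apply re_le_Cmod |].
  rewrite Cmod_mult; rewrite Hwz in Hw.
  apply Rle_trans with (Cmod u * (e / K * (Rabs (y - t) * Cmod d)));
    [apply Rmult_le_compat_l; assumption |].
  replace (Cmod u * (e / K * (Rabs (y - t) * Cmod d)))
    with (e * Rabs (y - t) * (Cmod u * Cmod d / K)) by (field; lra).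
  assert (Cmod u * Cmod d / K <= 1).
  { apply (Rmult_le_reg_r K); [exact HK |].
    unfold Rdiv; rewrite Rmult_assoc, Rinv_l by lra; unfold K; lra. }
  pose proof (Rabs_pos (y - t)).
  rewrite <- (Rmult_1_r (e * Rabs (y - t))) at 2; apply Rmult_le_compat_l; [nra | assumption].
Qed.

Lemma Re_conj_mul_le (a b : C) : Re (Cconj a * b) <= Cmod a * Cmod b.
Proof.
  eapply Rle_trans; [apply Rle_abs |]; eapply Rle_trans; [apply re_le_Cmod |].
  rewrite Cmod_mult, Cmod_conj; lra.
Qed.

Lemma conj_mul_self (a : C) : (Cconj a * a)%C = RtoC (Cmod a ^ 2).
Proof. rewrite Cmod2_alt; destruct a; apply injective_projections; unfold Re, Im; simpl; ring. Qed.

Lemma Cmod_sub_scal_sqr (a b : C) (r : R) :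
  Cmod (a - RtoC r * b) ^ 2 = Cmod a ^ 2 - 2 * r * Re (Cconj a * b) + r ^ 2 * Cmod b ^ 2.
Proof. rewrite !Cmod2_alt; destruct a, b; unfold Re, Im; simpl; ring. Qed.

Lemma le_of_sqr_le_mul (a b : R) : 0 <= a -> 0 <= b -> a ^ 2 <= a * b -> a <= b.
Proof. intros Ha Hb H; destruct (Rle_lt_dec a b) as [Hab | Hab]; [exact Hab | nra]. Qed.

Lemma Re_pos_of_ball (z0 z : C) : Cmod (z - z0) < Re z0 -> 0 < Re z.
Proof.
  intros H; pose proof (Rabs_Re_sub_le z0 z); pose proof (Rle_abs (Re z0 - Re z)).
  rewrite Cmod_sub_sym in H; lra.
Qed.

Lemma H0_open : open_C H0.
Proof. intros z Hz; exists (Re z); split; [exact Hz | intros w; apply Re_pos_of_ball]. Qed.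

Definition inverse_on (f : C -> C) (U : C -> Prop) (w : C) : C :=
  epsilon (inhabits (RtoC 0)) (fun z => U z /\ f z = w).

Lemma inverse_on_image (f : C -> C) (U : C -> Prop) (z : C) :
  (forall z1 z2, U z1 -> U z2 -> f z1 = f z2 -> z1 = z2) -> U z -> inverse_on f U (f z) = z.
Proof.
  intros Hinj Hz; unfold inverse_on.
  destruct (epsilon_spec (inhabits (RtoC 0)) (fun z' => U z' /\ f z' = f z)) as [H1 H2];
    [exists z; split; auto |].
  apply Hinj; auto.
Qed.

Section ExpandingHolomorphic.

Variables (f df : C -> C) (L : R).
Hypothesis f_deriv : forall z, 0 < Re z -> is_Cderive f z (df z).
Hypothesis Re_df_ge_1 : forall z, 0 < Re z -> 1 <= Re (df z).
Hypothesis Cmod_df_le : forall z, 0 < Re z -> Cmod (df z) <= L.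

Let Cmod_df_ge_1 (z : C) : 0 < Re z -> 1 <= Cmod (df z).
Proof.
  intros Hz; pose proof (Re_df_ge_1 z Hz); pose proof (re_le_Cmod (df z)).
  pose proof (Rle_abs (Re (df z))); lra.
Qed.

Let L_ge_1 : 1 <= L.
Proof.
  assert (H1 : 0 < Re (RtoC 1)) by (unfold Re; simpl; lra).
  pose proof (Cmod_df_ge_1 _ H1); pose proof (Cmod_df_le _ H1); lra.
Qed.

Lemma mean_value_Re_mul (z1 z2 u : C) : 0 < Re z1 -> 0 < Re z2 ->
  exists p, 0 < Re p /\ Re (u * (f z2 - f z1)) = Re (u * (z2 - z1) * df p).
Proof.
  intros H1 H2; set (d := (z2 - z1)%C).
  assert (Hseg : forall s, 0 <= s <= 1 -> 0 < Re (z1 + RtoC s * d)%C).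
  { intros s Hs; unfold d, Re in *; simpl; nra. }
  destruct (MVT_cor2 (fun s => Re (u * f (z1 + RtoC s * d)%C)%C)
              (fun s => Re (u * d * df (z1 + RtoC s * d)%C)%C) 0 1 Rlt_0_1) as [c [Hc Hcr]].
  { intros s Hs; apply derivable_pt_lim_Re_along_line, f_deriv, Hseg, Hs. }
  exists (z1 + RtoC c * d)%C; split; [apply Hseg; lra |].
  replace (z1 + RtoC 1 * d)%C with z2 in Hc by (unfold d; ring).
  replace (z1 + RtoC 0 * d)%C with z1 in Hc by (unfold d; ring).
  replace (Re (u * (f z2 - f z1))) with (Re (u * f z2) - Re (u * f z1)) by (unfold Re; simpl; ring).
  rewrite Hc; ring.
Qed.

Lemma Re_conj_mul_sub_ge (z1 z2 : C) : 0 < Re z1 -> 0 < Re z2 ->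
  Cmod (z2 - z1) ^ 2 <= Re (Cconj (z2 - z1) * (f z2 - f z1)).
Proof.
  intros H1 H2; destruct (mean_value_Re_mul z1 z2 (Cconj (z2 - z1)) H1 H2) as [p [Hp ->]].
  rewrite conj_mul_self, re_scal_l.
  pose proof (Re_df_ge_1 p Hp); pose proof (pow2_ge_0 (Cmod (z2 - z1))); nra.
Qed.

Lemma Cmod_sub_le_lipschitz (z1 z2 : C) : 0 < Re z1 -> 0 < Re z2 ->
  Cmod (f z2 - f z1) <= L * Cmod (z2 - z1).
Proof.
  intros H1 H2; set (D := (f z2 - f z1)%C).
  destruct (mean_value_Re_mul z1 z2 (Cconj D) H1 H2) as [p [Hp E]]; fold D in E.
  rewrite conj_mul_self, re_RtoC in E.
  assert (HD : Cmod D ^ 2 <= Cmod D * (L * Cmod (z2 - z1))).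
  { rewrite E; eapply Rle_trans; [apply Rle_abs |]; eapply Rle_trans; [apply re_le_Cmod |].
    rewrite !Cmod_mult, Cmod_conj.
    pose proof (Cmod_df_le p Hp); pose proof (Cmod_ge_0 D); pose proof (Cmod_ge_0 (z2 - z1)%C).
    assert (0 <= Cmod D * Cmod (z2 - z1)) by nra; nra. }
  apply le_of_sqr_le_mul; [apply Cmod_ge_0 | | exact HD].
  pose proof (Cmod_ge_0 (z2 - z1)%C); nra.
Qed.

Lemma Cmod_sub_le_expand (z1 z2 : C) : 0 < Re z1 -> 0 < Re z2 ->
  Cmod (z2 - z1) <= Cmod (f z2 - f z1).
Proof.
  intros H1 H2; apply le_of_sqr_le_mul; try apply Cmod_ge_0.
  eapply Rle_trans; [apply Re_conj_mul_sub_ge; assumption | apply Re_conj_mul_le].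
Qed.

Lemma injective_on_H0 (z1 z2 : C) : H0 z1 -> H0 z2 -> f z1 = f z2 -> z1 = z2.
Proof.
  intros H1 H2 E; symmetry; apply Cminus_eq_0, Rle_antisym; [| apply Cmod_ge_0].
  rewrite <- (Cmod_0); replace (RtoC 0) with (f z2 - f z1)%C by (rewrite E; ring).
  apply Cmod_sub_le_expand; assumption.
Qed.

Let lam := / (L * L).
Let q := sqrt (1 - lam).

Let lam_bounds : 0 < lam <= 1.
Proof.
  pose proof L_ge_1; unfold lam; split; [apply Rinv_0_lt_compat; nra |].
  rewrite <- Rinv_1; apply Rinv_le_contravar; nra.
Qed.

Let q_bounds : 0 <= q < 1.
Proof.
  pose proof lam_bounds; unfold q; split; [apply sqrt_pos |].
  apply Rlt_le_trans with (sqrt 1); [apply sqrt_lt_1_alt; lra | rewrite sqrt_1; lra].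
Qed.

(* [|d - lam D|^2 = |d|^2 - 2 lam Re (conj d D) + lam^2 |D|^2 <= (1 - 2 lam + lam^2 L^2) |d|^2]
   for [d = z2 - z1], [D = f z2 - f z1], and [lam L^2 = 1]. *)
Lemma newton_step_contraction (w z1 z2 : C) : 0 < Re z1 -> 0 < Re z2 ->
  Cmod ((z2 - RtoC lam * (f z2 - w)) - (z1 - RtoC lam * (f z1 - w))) <= q * Cmod (z2 - z1).
Proof.
  intros H1 H2.
  replace ((z2 - RtoC lam * (f z2 - w)) - (z1 - RtoC lam * (f z1 - w)))%C
    with ((z2 - z1) - RtoC lam * (f z2 - f z1))%C by ring.
  assert (Hsq : Cmod ((z2 - z1) - RtoC lam * (f z2 - f z1)) ^ 2 <= (1 - lam) * Cmod (z2 - z1) ^ 2).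
  { rewrite Cmod_sub_scal_sqr.
    pose proof (Re_conj_mul_sub_ge z1 z2 H1 H2).
    pose proof (Cmod_sub_le_lipschitz z1 z2 H1 H2); pose proof (Cmod_ge_0 (f z2 - f z1)%C).
    assert (HL : lam * (L * L) = 1) by (pose proof L_ge_1; unfold lam; field; lra).
    assert (Cmod (f z2 - f z1) ^ 2 <= L * L * Cmod (z2 - z1) ^ 2) by nra.
    pose proof lam_bounds.
    assert (lam ^ 2 * Cmod (f z2 - f z1) ^ 2 <= lam * Cmod (z2 - z1) ^ 2).
    { replace (lam * Cmod (z2 - z1) ^ 2) with (lam ^ 2 * (L * L * Cmod (z2 - z1) ^ 2))
        by (transitivity (lam * (lam * (L * L)) * Cmod (z2 - z1) ^ 2); [ring | rewrite HL; ring]).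
      apply Rmult_le_compat_l; [nra | assumption]. }
    nra. }
  unfold q; rewrite <- (sqrt_pow2 (Cmod _)) by apply Cmod_ge_0.
  rewrite <- (sqrt_pow2 (Cmod (z2 - z1))) by apply Cmod_ge_0.
  rewrite <- sqrt_mult_alt by (pose proof lam_bounds; lra).
  apply sqrt_le_1_alt, Hsq.
Qed.

Lemma local_surjectivity (z0 w : C) : 0 < Re z0 ->
  Cmod (w - f z0) < (1 - q) * Re z0 / lam -> exists z, 0 < Re z /\ f z = w.
Proof.
  intros Hz0 Hw; pose proof lam_bounds.
  destruct (contraction_fixed_point_in_ball (fun z => z - RtoC lam * (f z - w))%C z0 q (Re z0))
    as [z [Hz Ez]].
  - exact q_bounds.
  - intros z1 z2 H1 H2; apply newton_step_contraction; eapply Re_pos_of_ball; eassumption.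
  - replace (z0 - RtoC lam * (f z0 - w) - z0)%C with (RtoC lam * (w - f z0))%C by ring.
    rewrite Cmod_mult, Cmod_R, Rabs_pos_eq by lra.
    apply (Rmult_lt_compat_l lam) in Hw; [| lra].
    replace (lam * ((1 - q) * Re z0 / lam)) with ((1 - q) * Re z0) in Hw by (field; lra); exact Hw.
  - exists z; split; [eapply Re_pos_of_ball; eassumption |].
    assert (Hlam : (RtoC lam * (f z - w))%C = RtoC 0).
    { replace (RtoC lam * (f z - w))%C with (z - (z - RtoC lam * (f z - w)))%C by ring.
      rewrite Ez; ring. }
    apply (f_equal Cmod) in Hlam; rewrite Cmod_mult, Cmod_R, Cmod_0, Rabs_pos_eq in Hlam by lra.
    apply Cminus_eq_0; pose proof (Cmod_ge_0 (f z - w)%C); nra.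
Qed.

Let surj_radius (z0 : C) := (1 - q) * Re z0 / lam.

Let surj_radius_pos (z0 : C) : 0 < Re z0 -> 0 < surj_radius z0.
Proof. intros Hz0; unfold surj_radius; apply Rdiv_lt_0_compat; nra. Qed.

Lemma is_Cderive_inverse (z0 : C) : 0 < Re z0 ->
  is_Cderive (inverse_on f H0) (f z0) (/ df z0)%C.
Proof.
  intros Hz0; pose proof (Cmod_df_ge_1 z0 Hz0) as Hl.
  assert (Hl0 : df z0 <> RtoC 0) by (intros E; rewrite E, Cmod_0 in Hl; lra).
  apply is_Cderive_iff; intros e He.
  destruct (proj1 (is_Cderive_iff _ _ _) (f_deriv z0 Hz0) e He) as [d [Hd Hf]].
  exists (Rmin d (surj_radius z0)).
  split; [apply Rmin_pos; [exact Hd | apply surj_radius_pos, Hz0] |].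
  intros w Hw; pose proof (Rmin_l d (surj_radius z0)); pose proof (Rmin_r d (surj_radius z0)).
  destruct (local_surjectivity z0 w Hz0) as [z [Hz <-]]; [unfold surj_radius in *; lra |].
  rewrite !inverse_on_image by (exact injective_on_H0 || assumption).
  pose proof (Cmod_sub_le_expand z0 z Hz0 Hz) as Hexp.
  specialize (Hf z ltac:(lra)).
  replace (z - z0 - (f z - f z0) * / df z0)%C
    with (- ((f z - f z0 - (z - z0) * df z0) * / df z0))%C by (field; exact Hl0).
  rewrite Cmod_opp, Cmod_mult, Cmod_inv by exact Hl0.
  assert (/ Cmod (df z0) <= 1) by (rewrite <- Rinv_1; apply Rinv_le_contravar; lra).
  assert (0 < / Cmod (df z0)) by (apply Rinv_0_lt_compat; lra).
  pose proof (Cmod_ge_0 (f z - f z0 - (z - z0) * df z0)%C).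
  apply Rle_trans with (Cmod (f z - f z0 - (z - z0) * df z0)); [nra |].
  eapply Rle_trans; [exact Hf | apply Rmult_le_compat_l; lra].
Qed.

Theorem biholomorphic_H0_of_deriv_bounds : biholomorphic_onto_image f H0.
Proof.
  split; [exact H0_open |]; split; [intros z Hz; exists (df z); apply f_deriv, Hz |].
  split; [exact injective_on_H0 |]; split.
  - intros w [z0 [Hz0 ->]]; exists (surj_radius z0); split; [apply surj_radius_pos, Hz0 |].
    intros w Hw; destruct (local_surjectivity z0 w Hz0 Hw) as [z [Hz <-]]; exists z; auto.
  - exists (inverse_on f H0); split.
    + intros z Hz; apply inverse_on_image; [exact injective_on_H0 | exact Hz].
    + intros w [z0 [Hz0 ->]]; exists (/ df z0)%C; apply is_Cderive_inverse, Hz0.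
Qed.

End ExpandingHolomorphic.

Theorem phi_biholomorphic (Cc eps : R) : 0 <= Cc -> 0 <= eps <= 1 ->
  biholomorphic_onto_image (phi Cc eps) H0.
Proof.
  intros HC He; apply (biholomorphic_H0_of_deriv_bounds _ (dphi Cc eps) (1 + Cc * eps));
    intros z Hz; [apply is_Cderive_phi | apply Re_dphi_ge_1 | apply Cmod_dphi_le]; lra.
Qed.

(** * The image of the imaginary axis *)

Definition re_phi_ir (Cc eps r : R) : R :=
  Cc * Rpower (sqrt (1 + r * r)) eps * cos (eps * atan r).

Definition im_phi_ir (Cc eps r : R) : R :=
  r + Cc * Rpower (sqrt (1 + r * r)) eps * sin (eps * atan r).

Lemma phi_ir (Cc eps r : R) :
  phi Cc eps (Ci * RtoC r) = (re_phi_ir Cc eps r, im_phi_ir Cc eps r).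
Proof.
  unfold phi; rewrite Cpow_pr_polar.
  replace (1 + Ci * RtoC r)%C with ((1, r) : C) by (apply injective_projections; simpl; ring).
  rewrite Carg_of_Re_pos by (unfold Re; simpl; lra).
  unfold Cmod, Re, Im, re_phi_ir, im_phi_ir; simpl.
  replace (r / 1) with r by field; replace (1 * (1 * 1) + r * (r * 1)) with (1 + r * r) by ring.
  apply injective_projections; simpl; ring.
Qed.

Lemma Re_phi_ir (Cc eps r : R) : Re (phi Cc eps (Ci * RtoC r)) = re_phi_ir Cc eps r.
Proof. rewrite phi_ir; reflexivity. Qed.

Lemma Im_phi_ir (Cc eps r : R) : Im (phi Cc eps (Ci * RtoC r)) = im_phi_ir Cc eps r.
Proof. rewrite phi_ir; reflexivity. Qed.

Lemma is_lim_inv_p_infty : is_lim (fun r => / r) p_infty 0.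
Proof. apply (is_lim_inv (fun r => r) p_infty p_infty); [apply is_lim_id | discriminate]. Qed.

Lemma Rbar_mult_pos_p_infty (a : R) : 0 < a -> Rbar_mult a p_infty = p_infty.
Proof.
  intros Ha; simpl; destruct (Rle_dec 0 a) as [H |]; [| lra].
  destruct (Rle_lt_or_eq_dec 0 a H); [reflexivity | lra].
Qed.

Lemma is_lim_Rpower_pos (a : R) : 0 < a -> is_lim (fun r => Rpower r a) p_infty p_infty.
Proof.
  intros Ha; unfold Rpower.
  apply (is_lim_comp exp (fun r => a * ln r) p_infty p_infty p_infty);
    [apply is_lim_exp_p | | exists 0; intros; discriminate].
  rewrite <- (Rbar_mult_pos_p_infty a Ha) at 2; apply is_lim_scal_l, is_lim_ln_p.
Qed.

Lemma is_lim_Rpower_neg (a : R) : a < 0 -> is_lim (fun r => Rpower r a) p_infty 0.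
Proof.
  intros Ha; unfold Rpower.
  apply (is_lim_comp exp (fun r => a * ln r) p_infty 0 m_infty);
    [apply is_lim_exp_m | | exists 0; intros; discriminate].
  replace m_infty with (Rbar_mult a p_infty)
    by (simpl; destruct (Rle_dec 0 a); [exfalso; lra | reflexivity]).
  apply is_lim_scal_l, is_lim_ln_p.
Qed.

(* Real and imaginary parts of [(t + i)^eps]; for [r > 0], [(1 + i r)^eps = r^eps (1/r + i)^eps]. *)
Definition re_tpi_pow (eps t : R) : R :=
  Rpower (sqrt (1 + t * t)) eps * cos (eps * (PI / 2 - atan t)).

Definition im_tpi_pow (eps t : R) : R :=
  Rpower (sqrt (1 + t * t)) eps * sin (eps * (PI / 2 - atan t)).

Lemma Rpower_sqrt_1_plus_0 (eps : R) : Rpower (sqrt (1 + 0 * 0)) eps = 1.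
Proof. rewrite Rmult_0_l, Rplus_0_r, sqrt_1; apply Rpower_1_l. Qed.

Lemma sqrt_1_plus_sqr_scaling (r : R) : 0 < r -> sqrt (1 + r * r) = r * sqrt (1 + / r * / r).
Proof.
  intros Hr; replace (1 + r * r) with ((r * r) * (1 + / r * / r)) by (field; lra).
  rewrite sqrt_mult_alt, sqrt_square by nra; reflexivity.
Qed.

Lemma Rpower_sqrt_1_plus_sqr_scaling (eps r : R) : 0 < r ->
  Rpower (sqrt (1 + r * r)) eps = Rpower r eps * Rpower (sqrt (1 + / r * / r)) eps.
Proof.
  intros Hr; rewrite sqrt_1_plus_sqr_scaling, Rpower_mult_distr by (try apply sqrt_lt_R0; nra).
  reflexivity.
Qed.

Lemma re_phi_ir_scaling (Cc eps r : R) : 0 < r ->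
  re_phi_ir Cc eps r = Cc * Rpower r eps * re_tpi_pow eps (/ r).
Proof.
  intros Hr; unfold re_phi_ir, re_tpi_pow.
  rewrite Rpower_sqrt_1_plus_sqr_scaling, atan_inv by exact Hr.
  replace (PI / 2 - (PI / 2 - atan r)) with (atan r) by ring; ring.
Qed.

Lemma im_phi_ir_scaling (Cc eps r : R) : 0 < r ->
  im_phi_ir Cc eps r = r + Cc * Rpower r eps * im_tpi_pow eps (/ r).
Proof.
  intros Hr; unfold im_phi_ir, im_tpi_pow.
  rewrite Rpower_sqrt_1_plus_sqr_scaling, atan_inv by exact Hr.
  replace (PI / 2 - (PI / 2 - atan r)) with (atan r) by ring; ring.
Qed.

Lemma is_lim_re_tpi_pow_inv (eps : R) :
  is_lim (fun r => re_tpi_pow eps (/ r)) p_infty (cos (eps * (PI / 2))).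
Proof.
  replace (cos (eps * (PI / 2))) with (re_tpi_pow eps 0)
    by (unfold re_tpi_pow; rewrite Rpower_sqrt_1_plus_0, atan_0, Rminus_0_r; ring).
  apply (is_lim_comp_continuous (fun r => / r)); [apply is_lim_inv_p_infty |].
  apply (ex_derive_continuous (re_tpi_pow eps)); unfold re_tpi_pow, Rpower; auto_derive.
  rewrite Rmult_0_l, Rplus_0_r, sqrt_1; lra.
Qed.

Lemma is_lim_im_tpi_pow_inv (eps : R) :
  is_lim (fun r => im_tpi_pow eps (/ r)) p_infty (sin (eps * (PI / 2))).
Proof.
  replace (sin (eps * (PI / 2))) with (im_tpi_pow eps 0)
    by (unfold im_tpi_pow; rewrite Rpower_sqrt_1_plus_0, atan_0, Rminus_0_r; ring).
  apply (is_lim_comp_continuous (fun r => / r)); [apply is_lim_inv_p_infty |].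
  apply (ex_derive_continuous (im_tpi_pow eps)); unfold im_tpi_pow, Rpower; auto_derive.
  rewrite Rmult_0_l, Rplus_0_r, sqrt_1; lra.
Qed.

Section ImaginaryAxis.

Variables (Cc eps : R).
Hypothesis Cc_pos : 0 < Cc.
Hypothesis eps_bounds : 0 < eps < 1.

Lemma cos_eps_PI2_pos : 0 < cos (eps * (PI / 2)).
Proof. pose proof PI_RGT_0; apply cos_gt_0; nra. Qed.

Lemma is_lim_re_phi_ir_ratio :
  is_lim (fun r => re_phi_ir Cc eps r / (Cc * cos (eps * (PI / 2)) * Rpower r eps)) p_infty 1.
Proof.
  pose proof cos_eps_PI2_pos.
  apply is_lim_ext_loc with (fun r => / cos (eps * (PI / 2)) * re_tpi_pow eps (/ r)).
  { exists 0; intros r Hr; rewrite re_phi_ir_scaling by exact Hr.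
    pose proof (Rpower_pos r eps); field; lra. }
  replace (Finite 1) with (Rbar_mult (/ cos (eps * (PI / 2))) (cos (eps * (PI / 2))))
    by (simpl; f_equal; field; lra).
  apply is_lim_scal_l, is_lim_re_tpi_pow_inv.
Qed.

Lemma is_lim_im_phi_ir_ratio : is_lim (fun r => im_phi_ir Cc eps r / r) p_infty 1.
Proof.
  apply is_lim_ext_loc with (fun r => 1 + Cc * im_tpi_pow eps (/ r) * Rpower r (eps - 1)).
  { exists 0; intros r Hr; rewrite im_phi_ir_scaling by exact Hr.
    replace (Rpower r eps) with (Rpower r (eps - 1) * r)
      by (rewrite <- (Rpower_1 r) at 2 by exact Hr; rewrite <- Rpower_plus; f_equal; ring).
    field; lra. }
  eapply is_lim_plus; [apply is_lim_const | |].
  - apply (is_lim_mult (fun r => Cc * im_tpi_pow eps (/ r)) (fun r => Rpower r (eps - 1)) p_infty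
             (Cc * sin (eps * (PI / 2))) 0); [| apply is_lim_Rpower_neg; lra | exact I].
    apply (is_lim_scal_l _ Cc p_infty (sin (eps * (PI / 2)))), is_lim_im_tpi_pow_inv.
  - unfold is_Rbar_plus; simpl; f_equal; f_equal; ring.
Qed.

Lemma is_lim_re_phi_ir : is_lim (re_phi_ir Cc eps) p_infty p_infty.
Proof.
  pose proof cos_eps_PI2_pos.
  assert (Hpow : is_lim (fun r => Cc * cos (eps * (PI / 2)) * Rpower r eps) p_infty p_infty).
  { rewrite <- (Rbar_mult_pos_p_infty (Cc * cos (eps * (PI / 2)))) at 2 by nra.
    apply is_lim_scal_l, is_lim_Rpower_pos; lra. }
  assert (Hprod := is_lim_mult _ _ p_infty 1 p_infty is_lim_re_phi_ir_ratio Hpow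
                     ltac:(simpl; apply R1_neq_R0)).
  rewrite Rbar_mult_pos_p_infty in Hprod by lra.
  eapply is_lim_ext_loc; [| exact Hprod].
  exists 0; intros r _; simpl; pose proof (Rpower_pos r eps); field; nra.
Qed.

Let re_phi_ir_deriv (r : R) : R :=
  Cc * eps * Rpower (sqrt (1 + r * r)) eps / (1 + r * r)
  * (r * cos (eps * atan r) - sin (eps * atan r)).

Lemma is_derive_re_phi_ir (r : R) : is_derive (re_phi_ir Cc eps) r (re_phi_ir_deriv r).
Proof.
  assert (Hs : 0 < sqrt (1 + r * r)) by (apply sqrt_lt_R0; nra).
  assert (Hss : sqrt (1 + r * r) * sqrt (1 + r * r) = 1 + r * r) by (apply sqrt_sqrt; nra).
  unfold re_phi_ir, re_phi_ir_deriv, Rpower; auto_derive; [repeat split; nra |].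
  unfold Rsqr; replace (r * (r * 1)) with (r * r) by ring.
  set (s := sqrt (1 + r * r)) in *; rewrite <- Hss; field; lra.
Qed.

(* The derivative has the sign of [r cos (eps t) - sin (eps t) = sin ((1 - eps) t) / cos t],
   where [t = atan r]. *)
Lemma re_phi_ir_increasing (a b : R) :
  0 <= a -> a < b -> re_phi_ir Cc eps a < re_phi_ir Cc eps b.
Proof.
  intros Ha Hab.
  destruct (MVT_cor2 (re_phi_ir Cc eps) re_phi_ir_deriv a b Hab) as [c [Ec Hc]];
    [intros c _; apply is_derive_Reals, is_derive_re_phi_ir |].
  assert (Hpos : 0 < c * cos (eps * atan c) - sin (eps * atan c)).
  { pose proof (atan_bound c) as [Hb1 Hb2]; pose proof PI_RGT_0.
    pose proof (atan_increasing 0 c ltac:(lra)) as Ht; rewrite atan_0 in Ht.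
    set (t := atan c) in *.
    assert (Hcos : 0 < cos t) by (apply cos_gt_0; lra).
    assert (Er : c = sin t / cos t) by (unfold t; rewrite <- (tan_atan c) at 1; reflexivity).
    replace (c * cos (eps * t) - sin (eps * t)) with (sin (t - eps * t) / cos t)
      by (rewrite sin_minus, Er; field; lra).
    apply Rdiv_lt_0_compat; [apply sin_gt_0; nra | exact Hcos]. }
  assert (Hd : 0 < re_phi_ir_deriv c).
  { pose proof (Rpower_pos (sqrt (1 + c * c)) eps).
    apply Rmult_lt_0_compat; [| exact Hpos].
    apply Rdiv_lt_0_compat; [apply Rmult_lt_0_compat; nra | nra]. }
  nra.
Qed.

Lemma continuous_re_phi_ir (x : R) : continuity_pt (re_phi_ir Cc eps) x.
Proof.
  apply continuity_pt_filterlim, (ex_derive_continuous (re_phi_ir Cc eps)).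
  eexists; apply is_derive_re_phi_ir.
Qed.

Lemma re_phi_ir_0 : re_phi_ir Cc eps 0 = Cc.
Proof. unfold re_phi_ir; rewrite Rpower_sqrt_1_plus_0, atan_0, Rmult_0_r, cos_0; ring. Qed.

Lemma continuous_im_phi_ir (x : R) : continuous (im_phi_ir Cc eps) x.
Proof.
  apply (ex_derive_continuous (im_phi_ir Cc eps)); unfold im_phi_ir, Rpower; auto_derive.
  repeat split; try nra; apply sqrt_lt_R0; nra.
Qed.

Lemma im_phi_ir_nonneg (r : R) : 0 <= r -> 0 <= im_phi_ir Cc eps r.
Proof.
  intros Hr; unfold im_phi_ir; pose proof (atan_bound r); pose proof PI_RGT_0.
  assert (0 <= atan r).
  { destruct (Req_dec r 0) as [-> | Hr0]; [rewrite atan_0; lra |].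
    rewrite <- atan_0; left; apply atan_increasing; lra. }
  assert (0 <= sin (eps * atan r)) by (apply sin_ge_0; nra).
  pose proof (Rpower_pos (sqrt (1 + r * r)) eps).
  assert (0 <= Cc * Rpower (sqrt (1 + r * r)) eps * sin (eps * atan r))
    by (apply Rmult_le_pos; nra).
  lra.
Qed.

End ImaginaryAxis.

(** * Inverting the real part *)

Definition inverse_on_nonneg (h : R -> R) (x : R) : R :=
  epsilon (inhabits 0) (fun r => 0 <= r /\ h r = x).

Section IncreasingInverse.

Variables (h : R -> R) (c : R).
Hypothesis h_0 : h 0 = c.
Hypothesis h_increasing : forall a b, 0 <= a -> a < b -> h a < h b.
Hypothesis h_continuous : forall x, continuity_pt h x.
Hypothesis h_unbounded : is_lim h p_infty p_infty.

Let g := inverse_on_nonneg h.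

Let h_le (a b : R) : 0 <= a -> a <= b -> h a <= h b.
Proof.
  intros Ha Hab; destruct (Req_dec a b) as [-> | Hne]; [lra | left; apply h_increasing; lra].
Qed.

Lemma inverse_on_nonneg_spec (x : R) : c <= x -> 0 <= g x /\ h (g x) = x.
Proof.
  intros Hx; unfold g, inverse_on_nonneg; apply epsilon_spec.
  destruct (proj2 (is_lim_spec h p_infty p_infty) h_unbounded x) as [N HN].
  set (b := Rmax N 0 + 1).
  assert (Hb : 0 < b /\ x < h b).
  { pose proof (Rmax_l N 0); pose proof (Rmax_r N 0); unfold b; split; [lra | apply HN; lra]. }
  destruct (IVT_gen h 0 b x h_continuous) as [r [Hr Er]].
  { rewrite h_0, Rmin_left, Rmax_right; lra. }
  exists r; rewrite Rmin_left in Hr by lra; split; [lra | exact Er].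
Qed.

Lemma inverse_on_nonneg_image (r : R) : 0 <= r -> g (h r) = r.
Proof.
  intros Hr; assert (Hc : c <= h r) by (rewrite <- h_0; apply h_le; lra).
  destruct (inverse_on_nonneg_spec _ Hc) as [H1 H2].
  destruct (Rtotal_order (g (h r)) r) as [L | [E | L]]; [| exact E |];
    apply h_increasing in L; lra.
Qed.

Lemma inverse_on_nonneg_continuous (x : R) : c <= x ->
  filterlim g (within (fun y => c <= y) (locally x)) (locally (g x)).
Proof.
  intros Hx; apply filterlim_locally; intros e; pose proof (cond_pos e) as He.
  destruct (inverse_on_nonneg_spec x Hx) as [Hr0 Er0].
  assert (Hhi : x < h (g x + e / 2)) by (rewrite <- Er0 at 1; apply h_increasing; lra).
  set (lo := if Rle_dec 0 (g x - e / 2) then h (g x - e / 2) else x - 1).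
  assert (Hlo : lo < x).
  { unfold lo; destruct (Rle_dec 0 (g x - e / 2)); [| lra].
    rewrite <- Er0 at 2; apply h_increasing; lra. }
  assert (Hd : 0 < Rmin (h (g x + e / 2) - x) (x - lo)) by (apply Rmin_pos; lra).
  exists (mkposreal _ Hd); intros y Hy Hcy.
  change (Rabs (y - x) < Rmin (h (g x + e / 2) - x) (x - lo)) in Hy.
  change (Rabs (g y - g x) < e).
  pose proof (Rmin_l (h (g x + e / 2) - x) (x - lo)).
  pose proof (Rmin_r (h (g x + e / 2) - x) (x - lo)).
  apply Rabs_def2 in Hy; destruct (inverse_on_nonneg_spec y Hcy) as [Hgy Egy].
  assert (Hup : g y < g x + e / 2).
  { destruct (Rlt_le_dec (g y) (g x + e / 2)) as [Hlt | Hle]; [exact Hlt | exfalso].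
    pose proof (h_le (g x + e / 2) (g y) ltac:(lra) Hle); lra. }
  assert (Hdown : g x - e / 2 < g y).
  { unfold lo in *; destruct (Rle_dec 0 (g x - e / 2)) as [Hle0 | Hlt0]; [| lra].
    destruct (Rlt_le_dec (g x - e / 2) (g y)) as [Hlt | Hle]; [exact Hlt | exfalso].
    pose proof (h_le (g y) (g x - e / 2) Hgy Hle); lra. }
  apply Rabs_def1; lra.
Qed.

Lemma is_lim_inverse_on_nonneg : is_lim g p_infty p_infty.
Proof.
  apply is_lim_spec; intros M; exists (h (Rmax M 0)); intros x Hx.
  assert (Hc : c <= h (Rmax M 0)) by (rewrite <- h_0; apply h_le; [lra | apply Rmax_r]).
  destruct (inverse_on_nonneg_spec x ltac:(lra)) as [H1 H2].
  destruct (Rlt_le_dec (Rmax M 0) (g x)) as [H | H]; [pose proof (Rmax_l M 0); lra | exfalso].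
  pose proof (h_le _ _ H1 H); lra.
Qed.

End IncreasingInverse.

(* For [x = u r] with [r = g x] and [rho r = u r / (a r^p) -> 1], one has
   [a^(-1/p) x^(1/p) = rho(r)^(1/p) r], so the ratio is [(v r / r) / rho(r)^(1/p) -> 1]. *)
Lemma is_lim_ratio_inverse_power (u v g : R -> R) (a p M : R) : 0 < a -> 0 < p ->
  is_lim (fun r => u r / (a * Rpower r p)) p_infty 1 ->
  is_lim (fun r => v r / r) p_infty 1 ->
  is_lim g p_infty p_infty ->
  (forall x, M < x -> 0 < g x /\ u (g x) = x) ->
  is_lim (fun x => v (g x) / (Rpower a (- (1 / p)) * Rpower x (1 / p))) p_infty 1.
Proof.
  intros Ha Hp Hu Hv Hg Hinv.
  set (rho r := u r / (a * Rpower r p)).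
  assert (Hrho : is_lim (fun r => Rpower (rho r) (1 / p)) p_infty 1).
  { replace (Finite 1) with (Finite (Rpower 1 (1 / p))) by (rewrite Rpower_1_l; reflexivity).
    apply (is_lim_comp_continuous rho (fun y => Rpower y (1 / p))); [exact Hu |].
    apply (ex_derive_continuous (fun y => Rpower y (1 / p))); unfold Rpower; auto_derive; lra. }
  assert (Hquot := is_lim_div _ _ p_infty 1 1 Hv Hrho ltac:(intros E; injection E; lra) I).
  simpl in Hquot; replace (1 * / 1) with 1 in Hquot by field.
  apply is_lim_ext_loc with (fun x => (v (g x) / g x) / Rpower (rho (g x)) (1 / p)).
  - exists (Rmax M 0); intros x Hx.
    pose proof (Rmax_l M 0); pose proof (Rmax_r M 0).
    destruct (Hinv x ltac:(lra)) as [Hr Ex]; set (r := g x) in *.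
    pose proof (Rpower_pos r p).
    assert (Hrho_pos : 0 < rho r) by (unfold rho; rewrite Ex; apply Rdiv_lt_0_compat; nra).
    assert (Exr : x = rho r * a * Rpower r p) by (unfold rho; rewrite Ex; field; lra).
    assert (E : Rpower a (- (1 / p)) * Rpower x (1 / p) = Rpower (rho r) (1 / p) * r).
    { rewrite Exr, <- !Rpower_mult_distr, Rpower_mult by nra.
      replace (p * (1 / p)) with 1 by (field; lra).
      rewrite Rpower_1, Rpower_Ropp by lra.
      pose proof (Rpower_pos a (1 / p)); field; lra. }
    rewrite E; pose proof (Rpower_pos (rho r) (1 / p)); field; lra.
  - apply (is_lim_comp (fun r => (v r / r) / Rpower (rho r) (1 / p)) g p_infty 1 p_infty Hquot Hg).
    exists 0; intros; discriminate.
Qed.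

Lemma equiv_pinfty_ext (f1 f2 g : R -> R) :
  (forall x, f1 x = f2 x) -> equiv_pinfty f2 g -> equiv_pinfty f1 g.
Proof.
  intros E [Hg Hlim]; split; [exact Hg |].
  eapply is_lim_ext; [| exact Hlim]; intros x; simpl; rewrite E; reflexivity.
Qed.

Definition f_C (Cc eps x : R) : R :=
  im_phi_ir Cc eps (inverse_on_nonneg (re_phi_ir Cc eps) x).

Section ImaginaryAxisAsymptotics.

Variables (Cc eps : R).
Hypothesis Cc_pos : 0 < Cc.
Hypothesis eps_bounds : 0 < eps < 1.

Let re_0 := re_phi_ir_0 Cc eps.
Let re_increasing := re_phi_ir_increasing Cc eps Cc_pos eps_bounds.
Let re_continuous := continuous_re_phi_ir Cc eps.
Let re_unbounded := is_lim_re_phi_ir Cc eps Cc_pos eps_bounds.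
Let re_inverse_spec := inverse_on_nonneg_spec _ _ re_0 re_continuous re_unbounded.

Lemma re_phi_ir_equiv :
  equiv_pinfty (re_phi_ir Cc eps) (fun r => Cc * cos (eps * (PI / 2)) * Rpower r eps).
Proof.
  pose proof (cos_eps_PI2_pos eps eps_bounds).
  split; [| apply is_lim_re_phi_ir_ratio; assumption].
  exists 0; intros x _; pose proof (Rpower_pos x eps).
  apply Rgt_not_eq, Rmult_gt_0_compat; nra.
Qed.

Lemma im_phi_ir_equiv : equiv_pinfty (im_phi_ir Cc eps) (fun r => r).
Proof. split; [exists 0; intros x Hx; lra | apply is_lim_im_phi_ir_ratio, eps_bounds]. Qed.

Lemma Cc_le_re_phi_ir (r : R) : 0 <= r -> Cc <= re_phi_ir Cc eps r.
Proof.
  intros Hr; rewrite <- (re_phi_ir_0 Cc eps) at 1.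
  destruct (Req_dec r 0) as [-> | Hr0]; [lra |].
  left; apply re_phi_ir_increasing; lra.
Qed.

Lemma f_C_re_phi_ir (r : R) : 0 <= r -> f_C Cc eps (re_phi_ir Cc eps r) = im_phi_ir Cc eps r.
Proof.
  intros Hr; unfold f_C.
  rewrite (inverse_on_nonneg_image _ _ re_0 re_increasing re_continuous re_unbounded r Hr).
  reflexivity.
Qed.

Lemma f_C_nonneg (x : R) : Cc <= x -> 0 <= f_C Cc eps x.
Proof.
  intros Hx; apply im_phi_ir_nonneg; [exact Cc_pos | exact eps_bounds | apply re_inverse_spec, Hx].
Qed.

Lemma f_C_continuous (x : R) : Cc <= x ->
  filterlim (f_C Cc eps) (within (fun y => Cc <= y) (locally x)) (locally (f_C Cc eps x)).
Proof.
  intros Hx; unfold f_C; eapply filterlim_comp; [| apply continuous_im_phi_ir].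
  exact (inverse_on_nonneg_continuous _ _ re_0 re_increasing re_continuous re_unbounded x Hx).
Qed.

Lemma f_C_equiv : equiv_pinfty (f_C Cc eps)
  (fun r => Rpower (Cc * cos (eps * (PI / 2))) (- (1 / eps)) * Rpower r (1 / eps)).
Proof.
  pose proof (cos_eps_PI2_pos eps eps_bounds); split.
  - exists 0; intros x _; pose proof (Rpower_pos (Cc * cos (eps * (PI / 2))) (- (1 / eps))).
    pose proof (Rpower_pos x (1 / eps)); apply Rgt_not_eq, Rmult_gt_0_compat; lra.
  - apply (is_lim_ratio_inverse_power (re_phi_ir Cc eps) (im_phi_ir Cc eps) _ _ _ Cc);
      [nra | lra | | | |].
    + apply is_lim_re_phi_ir_ratio; assumption.
    + apply is_lim_im_phi_ir_ratio, eps_bounds.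
    + exact (is_lim_inverse_on_nonneg _ _ re_0 re_increasing re_continuous re_unbounded).
    + intros x Hx; destruct (re_inverse_spec x ltac:(lra)) as [Hr Ex]; split; [| exact Ex].
      destruct Hr as [Hr | Hr0]; [exact Hr |]; rewrite <- Hr0, re_0 in Ex; lra.
Qed.

End ImaginaryAxisAsymptotics.

Theorem lemma3p1 (Cc eps : R) (hC : 0 < Cc) (heps0 : 0 < eps) (heps1 : eps < 1) :
  (* (1) *)
  biholomorphic_onto_image (phi Cc eps) H0 /\
  (* (2) *)
  equiv_pinfty (fun r => Re (phi Cc eps (Ci * RtoC r)))
               (fun r => Cc * cos (eps * (PI / 2)) * Rpower r eps) /\
  equiv_pinfty (fun r => Im (phi Cc eps (Ci * RtoC r))) (fun r => r) /\
  (* (3) *)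
  exists f : R -> R,
    (forall x, Cc <= x ->
       filterlim f (within (fun y => Cc <= y) (locally x)) (locally (f x))) /\
    (forall x, Cc <= x -> 0 <= f x) /\
    (forall r, 0 < r ->
       Cc <= Re (phi Cc eps (Ci * RtoC r)) /\
       Im (phi Cc eps (Ci * RtoC r)) = f (Re (phi Cc eps (Ci * RtoC r)))) /\
    equiv_pinfty f
      (fun r => Rpower (Cc * cos (eps * (PI / 2))) (- (1 / eps)) * Rpower r (1 / eps)).
Proof.
  assert (He : 0 < eps < 1) by lra.
  split; [apply phi_biholomorphic; lra |].
  split; [apply (equiv_pinfty_ext _ _ _ (Re_phi_ir Cc eps)), re_phi_ir_equiv; assumption |].
  split; [apply (equiv_pinfty_ext _ _ _ (Im_phi_ir Cc eps)), im_phi_ir_equiv, He |].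
  exists (f_C Cc eps); split; [| split; [| split]].
  - intros x Hx; apply f_C_continuous; assumption.
  - intros x Hx; apply f_C_nonneg; assumption.
  - intros r Hr; rewrite Re_phi_ir, Im_phi_ir, f_C_re_phi_ir by (assumption || lra).
    split; [apply Cc_le_re_phi_ir |]; (assumption || lra).
  - apply f_C_equiv; assumption.
Qed.
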